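(* Let $A \in \mathbb{R}^{m \times n}$ have full column rank and let $p \in [1,\infty]$. Then there exists an invertible matrix $R \in \mathbb{R}^{n \times n}$ such that $\bar\kappa_p(A R^{-1}) \le n$.
   Context: For $p\in[1,\infty]$ let $q$ be the dual exponent ($1/p+1/q=1$), so $\|\cdot\|_q$ is the dual norm of $\|\cdot\|_p$. For a matrix $M \in \mathbb{R}^{m \times n}$, write $|M|_p = (\sum_{i,j}|M_{ij}|^p)^{1/p}$ for the entrywise $\ell_p$ norm (the maximum absolute entry if $p=\infty$). $M$ is called $(\alpha,\beta,p)$-conditioned if (1) $|M|_p \le \alpha$ and (2) $\|z\|_q \le \beta \|Mz\|_p$ for all $z\in\mathbb{R}^n$. The $(\alpha,\beta,p)$-condition number $\bar\kappa_p(M)$ is the minimum (infimum) of $\alpha\beta$ over all $(\alpha,\beta)$ for which $M$ is $(\alpha,\beta,p)$-conditioned. *)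

From Stdlib Require Import Reals List.
Import ListNotations.
Open Scope R_scope.

(* Matrices/vectors are functions on indices; only indices i < m, j < n matter. *)
Definition vec := nat -> R.
Definition mat := nat -> nat -> R.

Inductive pexp : Type := PFin (p : R) | PInf.

Definition valid_pexp (p : pexp) : Prop :=
  match p with PFin r => 1 <= r | PInf => True end.

(* dual exponent q with 1/p + 1/q = 1 *)
Definition dual_pexp (p : pexp) : pexp :=
  match p with
  | PInf => PFin 1
  | PFin r => if Req_EM_T r 1 then PInf else PFin (r / (r - 1))
  end.

(* x^y for x >= 0, with 0^y = 0 (y > 0) *)
Definition rpow (x y : R) : R := if Rlt_dec 0 x then Rpower x y else 0.

Definition sumn (n : nat) (f : nat -> R) : R := fold_right Rplus 0 (map f (seq 0 n)).
Definition maxn (n : nat) (f : nat -> R) : R := fold_right Rmax 0 (map f (seq 0 n)).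

Definition vnorm (p : pexp) (n : nat) (z : vec) : R :=
  match p with
  | PFin r => rpow (sumn n (fun i => rpow (Rabs (z i)) r)) (/ r)
  | PInf => maxn n (fun i => Rabs (z i))
  end.

Definition entnorm (p : pexp) (m n : nat) (M : mat) : R :=
  match p with
  | PFin r => rpow (sumn m (fun i => sumn n (fun j => rpow (Rabs (M i j)) r))) (/ r)
  | PInf => maxn m (fun i => maxn n (fun j => Rabs (M i j)))
  end.

Definition mulmv (n : nat) (M : mat) (z : vec) : vec :=
  fun i => sumn n (fun j => M i j * z j).

Definition mulmm (k : nat) (A B : mat) : mat :=
  fun i j => sumn k (fun l => A i l * B l j).

Definition idm : mat := fun i j => if Nat.eq_dec i j then 1 else 0.

Definition full_col_rank (m n : nat) (A : mat) : Prop :=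
  forall z : vec, (forall i, (i < m)%nat -> mulmv n A z i = 0) ->
    forall j, (j < n)%nat -> z j = 0.

Definition inverse_of (n : nat) (Rm Rinv : mat) : Prop :=
  (forall i j, (i < n)%nat -> (j < n)%nat -> mulmm n Rm Rinv i j = idm i j) /\
  (forall i j, (i < n)%nat -> (j < n)%nat -> mulmm n Rinv Rm i j = idm i j).

Definition conditioned (p : pexp) (m n : nat) (M : mat) (alpha beta : R) : Prop :=
  entnorm p m n M <= alpha /\
  forall z : vec, vnorm (dual_pexp p) n z <= beta * vnorm p m (mulmv n M z).

Definition cond_products (p : pexp) (m n : nat) (M : mat) (t : R) : Prop :=
  exists alpha beta, 0 <= alpha /\ 0 <= beta /\
    conditioned p m n M alpha beta /\ t = alpha * beta.

Definition is_glb (S : R -> Prop) (x : R) : Prop :=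
  (forall y, S y -> x <= y) /\ (forall x', (forall y, S y -> x' <= y) -> x' <= x).

(* kappa_p(M) = k, the infimum of cond_products (only meaningful when attained as a real) *)
Definition cond_number_is (p : pexp) (m n : nat) (M : mat) (k : R) : Prop :=
  is_glb (cond_products p m n M) k.

(* Auerbach's lemma.  Since A is injective, the set K of vectors w with
   ‖A w‖_p ≤ 1 is compact, so among the matrices Z whose columns all lie in K
   there is one of maximal |det Z|, and it is invertible.  Replacing column i
   of Z by any w ∈ K cannot increase |det Z|, which by Cramer's rule means
   |(Z⁻¹ w)_i| ≤ 1; by homogeneity |y_i| ≤ ‖A Z y‖_p for every y.  Hence the
   columns of A Z have p-norm at most 1, so |A Z|_p ≤ n^(1/p), and
   ‖y‖_q ≤ n^(1/q) max_i |y_i| ≤ n^(1/q) ‖A Z y‖_p.  Taking R = Z⁻¹, the matrix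
   A R⁻¹ is (n^(1/p), n^(1/q), p)-conditioned and n^(1/p) n^(1/q) = n. *)

From Pilot Require Import Defs.
From Stdlib Require Import Reals Lra Lia List.
Open Scope R_scope.

Lemma fsum_ext (f g : nat -> R) (l : list nat) :
  (forall i, In i l -> f i = g i) ->
  fold_right Rplus 0 (map f l) = fold_right Rplus 0 (map g l).
Proof.
induction l as [|a l IH]; simpl; intros H; [reflexivity|].
rewrite (H a), IH by auto; reflexivity.
Qed.

Lemma fsum_le (f g : nat -> R) (l : list nat) :
  (forall i, In i l -> f i <= g i) ->
  fold_right Rplus 0 (map f l) <= fold_right Rplus 0 (map g l).
Proof.
induction l as [|a l IH]; simpl; intros H; [lra|].
apply Rplus_le_compat; auto.
Qed.

Lemma fsum_ge0 (f : nat -> R) (l : list nat) :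
  (forall i, In i l -> 0 <= f i) -> 0 <= fold_right Rplus 0 (map f l).
Proof.
induction l as [|a l IH]; simpl; intros H; [lra|].
apply Rplus_le_le_0_compat; auto.
Qed.

Lemma fsum_ge_term (f : nat -> R) (l : list nat) i :
  (forall i, In i l -> 0 <= f i) -> In i l -> f i <= fold_right Rplus 0 (map f l).
Proof.
induction l as [|a l IH]; simpl; intros H Hi; [contradiction|].
assert (0 <= f a) by auto.
assert (0 <= fold_right Rplus 0 (map f l)) by (apply fsum_ge0; auto).
destruct Hi as [<-|Hi]; [lra|].
assert (f i <= fold_right Rplus 0 (map f l)) by auto. lra.
Qed.

Lemma fsum_scal (c : R) (f : nat -> R) (l : list nat) :
  fold_right Rplus 0 (map (fun i => c * f i) l) = c * fold_right Rplus 0 (map f l).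
Proof. induction l as [|a l IH]; simpl; [ring|]. rewrite IH; ring. Qed.

Lemma fsum_plus (f g : nat -> R) (l : list nat) :
  fold_right Rplus 0 (map (fun i => f i + g i) l) =
  fold_right Rplus 0 (map f l) + fold_right Rplus 0 (map g l).
Proof. induction l as [|a l IH]; simpl; [ring|]. rewrite IH; ring. Qed.

Lemma fsum_const (c : R) (l : list nat) :
  fold_right Rplus 0 (map (fun _ => c) l) = INR (length l) * c.
Proof.
induction l as [|a l IH]; [simpl; ring|].
cbn [map fold_right length]. rewrite IH, S_INR; ring.
Qed.

Lemma fmax_ge0 (f : nat -> R) (l : list nat) : 0 <= fold_right Rmax 0 (map f l).
Proof.
induction l as [|a l IH]; simpl; [lra|].
eapply Rle_trans; [exact IH| apply Rmax_r].
Qed.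

Lemma fmax_ge_term (f : nat -> R) (l : list nat) i :
  In i l -> f i <= fold_right Rmax 0 (map f l).
Proof.
induction l as [|a l IH]; simpl; intros Hi; [contradiction|].
destruct Hi as [<-|Hi]; [apply Rmax_l|].
eapply Rle_trans; [apply IH; auto| apply Rmax_r].
Qed.

Lemma fmax_lub (f : nat -> R) (l : list nat) c :
  0 <= c -> (forall i, In i l -> f i <= c) -> fold_right Rmax 0 (map f l) <= c.
Proof.
induction l as [|a l IH]; simpl; intros Hc H; [lra|].
apply Rmax_lub; auto.
Qed.

Lemma fmax_ext (f g : nat -> R) (l : list nat) :
  (forall i, In i l -> f i = g i) ->
  fold_right Rmax 0 (map f l) = fold_right Rmax 0 (map g l).
Proof.
induction l as [|a l IH]; simpl; intros H; [reflexivity|].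
rewrite (H a), IH by auto; reflexivity.
Qed.

Lemma fmax_scal (c : R) (f : nat -> R) (l : list nat) : 0 <= c ->
  fold_right Rmax 0 (map (fun i => c * f i) l) = c * fold_right Rmax 0 (map f l).
Proof.
intros Hc; induction l as [|a l IH]; simpl; [ring|]. rewrite IH, RmaxRmult; auto.
Qed.

Lemma fsum_swap (F : nat -> nat -> R) (l1 l2 : list nat) :
  fold_right Rplus 0 (map (fun i => fold_right Rplus 0 (map (F i) l2)) l1) =
  fold_right Rplus 0 (map (fun j => fold_right Rplus 0 (map (fun i => F i j) l1)) l2).
Proof.
induction l1 as [|a l1 IH]; simpl.
- induction l2 as [|b l2 IH2]; simpl; [reflexivity|]. rewrite <- IH2; ring.
- rewrite IH, <- fsum_plus. reflexivity.
Qed.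

Lemma rpow_ge0 x y : 0 <= rpow x y.
Proof. unfold rpow; destruct (Rlt_dec 0 x); [left; apply exp_pos|lra]. Qed.

Lemma rpow_pos x y : 0 < x -> rpow x y = Rpower x y.
Proof. intros; unfold rpow; destruct (Rlt_dec 0 x); [auto|lra]. Qed.

Lemma rpow_0 y : rpow 0 y = 0.
Proof. unfold rpow; destruct (Rlt_dec 0 0); [lra|auto]. Qed.

Lemma rpow_1 x : 0 <= x -> rpow x 1 = x.
Proof.
intros [H|<-]; [rewrite rpow_pos by auto; apply Rpower_1; auto| apply rpow_0].
Qed.

Lemma rpow_le1 x y : 0 <= x -> 0 < y -> (rpow x y <= 1 <-> x <= 1).
Proof.
intros [Hx|<-] Hy; [|rewrite rpow_0; lra].
rewrite rpow_pos by auto. unfold Rpower. split; intros H.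
- destruct (Rle_lt_dec x 1) as [|H1]; auto.
  apply ln_increasing in H1; [|lra]. rewrite ln_1 in H1.
  assert (1 < exp (y * ln x)). { rewrite <- exp_0. apply exp_increasing. nra. }
  lra.
- destruct H as [H|H].
  + apply ln_increasing in H; [|lra]. rewrite ln_1 in H.
    rewrite <- exp_0. left. apply exp_increasing. nra.
  + subst. rewrite ln_1, Rmult_0_r, exp_0. lra.
Qed.

Lemma rpow_mult_distr a b y : 0 <= a -> 0 <= b -> 0 < y ->
  rpow (a * b) y = rpow a y * rpow b y.
Proof.
intros [Ha|<-] [Hb|<-] Hy; try (rewrite ?Rmult_0_l, ?Rmult_0_r, ?rpow_0; ring).
rewrite !rpow_pos by (try apply Rmult_lt_0_compat; auto).
symmetry; apply Rpower_mult_distr; auto.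
Qed.

Lemma rpow_rpow x y z : 0 <= x -> 0 < y -> rpow (rpow x y) z = rpow x (y * z).
Proof.
intros [Hx|<-] Hy; [|rewrite !rpow_0; auto].
rewrite (rpow_pos x y) by auto. rewrite !rpow_pos by (auto; apply exp_pos).
apply Rpower_mult.
Qed.

Lemma rpow_inv_rpow x r : 0 <= x -> 0 < r -> rpow (rpow x r) (/ r) = x.
Proof.
intros Hx Hr. rewrite rpow_rpow by auto.
replace (r * / r) with 1 by (field; lra). apply rpow_1; auto.
Qed.

Lemma rpow_plus x y z : 0 < x -> rpow x (y + z) = rpow x y * rpow x z.
Proof. intros; rewrite !rpow_pos by auto; apply Rpower_plus. Qed.

Lemma rpow_le_compat_l a b y : 0 <= a <= b -> 0 < y -> rpow a y <= rpow b y.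
Proof.
intros [[Ha|<-] Hab] Hy; [|rewrite rpow_0; apply rpow_ge0].
rewrite !rpow_pos by lra. apply Rle_Rpower_l; lra.
Qed.

Lemma rpow_le_self x r : 0 <= x <= 1 -> 1 <= r -> rpow x r <= x.
Proof.
intros [[Hx|<-] H1] Hr; [|rewrite rpow_0; lra].
rewrite rpow_pos by auto. unfold Rpower.
destruct H1 as [H1|H1]; [|subst x; rewrite ln_1, Rmult_0_r, exp_0; lra].
apply ln_increasing in H1; auto. rewrite ln_1 in H1.
rewrite <- (exp_ln x) at 2 by auto.
destruct (Rle_lt_or_eq_dec _ _ Hr) as [Hr'|<-];
  [left; apply exp_increasing; nra| rewrite Rmult_1_l; lra].
Qed.

(* Near [t <> 0] the map is [exp (r * ln |t|)]; at [0] it is squeezed by [|t|]. *)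
Lemma continuity_rpow_abs r t : 1 <= r -> continuity_pt (fun t => rpow (Rabs t) r) t.
Proof.
intros Hr. destruct (Req_dec t 0) as [->|Ht].
- intros eps Heps. exists (Rmin 1 eps). split; [apply Rmin_pos; lra|].
  intros x [_ Hx]. simpl in *. unfold R_dist in *. rewrite Rminus_0_r in Hx.
  rewrite Rabs_R0, rpow_0, Rminus_0_r, Rabs_pos_eq by apply rpow_ge0.
  pose proof (Rmin_l 1 eps). pose proof (Rmin_r 1 eps).
  eapply Rle_lt_trans; [apply rpow_le_self; auto; split; [apply Rabs_pos|lra]|lra].
- set (h := fun u => exp (r * ln (Rabs u))).
  assert (Hh : continuity_pt h t).
  { unfold h. apply (continuity_pt_comp (fun u => r * ln (Rabs u)) exp).
    - apply continuity_pt_mult; [apply continuity_pt_const; intros ? ?; reflexivity|].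
      apply (continuity_pt_comp Rabs ln); [apply Rcontinuity_abs|].
      apply derivable_continuous_pt. exists (/ Rabs t).
      apply derivable_pt_lim_ln. apply Rabs_pos_lt; auto.
    - apply derivable_continuous_pt, derivable_pt_exp. }
  intros eps Heps. destruct (Hh eps Heps) as [alp [Halp H]].
  exists (Rmin alp (Rabs t)). split; [apply Rmin_pos; auto; apply Rabs_pos_lt; auto|].
  intros x [Dx Hx]. simpl in *. unfold R_dist in *.
  assert (x <> 0).
  { intros ->. rewrite Rminus_0_l, Rabs_Ropp in Hx. pose proof (Rmin_r alp (Rabs t)). lra. }
  rewrite !rpow_pos by (apply Rabs_pos_lt; auto). apply H. split; [exact Dx|].
  pose proof (Rmin_l alp (Rabs t)). lra.
Qed.

Lemma valid_dual_pexp p : valid_pexp p -> valid_pexp (dual_pexp p).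
Proof.
destruct p as [r|]; simpl; [|lra]. intros H.
destruct (Req_EM_T r 1); simpl; auto.
apply (Rmult_le_reg_r (r - 1)); [lra|].
unfold Rdiv. rewrite Rmult_assoc, Rinv_l by lra. lra.
Qed.

Lemma vnorm_ge0 p n x : 0 <= vnorm p n x.
Proof. destruct p; simpl; [apply rpow_ge0| apply fmax_ge0]. Qed.

Lemma vnorm_ext p n x y :
  (forall i, (i < n)%nat -> x i = y i) -> vnorm p n x = vnorm p n y.
Proof.
intros H; destruct p; simpl; unfold sumn, maxn.
- f_equal. apply fsum_ext. intros i Hi; apply in_seq in Hi. rewrite H by lia; auto.
- apply fmax_ext. intros i Hi; apply in_seq in Hi. rewrite H by lia; auto.
Qed.

Lemma Rabs_le_vnorm p n x i : valid_pexp p -> (i < n)%nat -> Rabs (x i) <= vnorm p n x.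
Proof.
intros Hp Hi; destruct p as [r|]; simpl in *.
- rewrite <- (rpow_inv_rpow (Rabs (x i)) r) by (try apply Rabs_pos; lra).
  apply rpow_le_compat_l; [split; [apply rpow_ge0|]|apply Rinv_0_lt_compat; lra].
  apply (fsum_ge_term (fun i => rpow (Rabs (x i)) r)); [intros; apply rpow_ge0|].
  apply in_seq; lia.
- apply (fmax_ge_term (fun i => Rabs (x i))). apply in_seq; lia.
Qed.

Lemma vnorm_eq0 p n x : valid_pexp p -> vnorm p n x = 0 ->
  forall i, (i < n)%nat -> x i = 0.
Proof.
intros Hp H i Hi. pose proof (Rabs_le_vnorm p n x i Hp Hi).
pose proof (Rabs_pos (x i)).
destruct (Req_dec (x i) 0) as [|Hx]; auto. apply Rabs_no_R0 in Hx; lra.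
Qed.

Lemma vnorm_scal p n c x : valid_pexp p ->
  vnorm p n (fun i => c * x i) = Rabs c * vnorm p n x.
Proof.
intros Hp; destruct p as [r|]; simpl in *; unfold sumn, maxn.
- rewrite (fsum_ext _ (fun i => rpow (Rabs c) r * rpow (Rabs (x i)) r)).
  2:{ intros i _. rewrite Rabs_mult. apply rpow_mult_distr; try apply Rabs_pos; lra. }
  rewrite fsum_scal, rpow_mult_distr, rpow_inv_rpow; try apply Rabs_pos;
    try apply rpow_ge0; try (apply Rinv_0_lt_compat); try lra.
  apply fsum_ge0; intros; apply rpow_ge0.
- rewrite (fmax_ext _ (fun i => Rabs c * Rabs (x i))) by (intros; apply Rabs_mult).
  apply fmax_scal, Rabs_pos.
Qed.

(* [‖x‖_p ^ p] (and [‖x‖_∞] for [p = ∞]): the same unit ball as the norm, but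
   continuity only needs [t ↦ |t|^p] with [p ≥ 1], not the root [1/p]. *)
Definition vnorm_gauge (p : pexp) (n : nat) (x : vec) : R :=
  match p with
  | PFin r => sumn n (fun i => rpow (Rabs (x i)) r)
  | PInf => maxn n (fun i => Rabs (x i))
  end.

Lemma vnorm_le1 p n x : valid_pexp p -> (vnorm p n x <= 1 <-> vnorm_gauge p n x <= 1).
Proof.
intros Hp; destruct p as [r|]; simpl in *; [|tauto].
apply rpow_le1; [apply fsum_ge0; intros; apply rpow_ge0| apply Rinv_0_lt_compat; lra].
Qed.

Definition dim_root (p : pexp) (n : nat) : R :=
  match p with PFin r => rpow (INR n) (/ r) | PInf => 1 end.

Lemma dim_root_ge0 p n : 0 <= dim_root p n.
Proof. destruct p; simpl; [apply rpow_ge0|lra]. Qed.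

Lemma dim_root_dual p n : valid_pexp p -> dim_root p n * dim_root (dual_pexp p) n = INR n.
Proof.
intros Hp. destruct (Nat.eq_dec n 0) as [->|Hn].
{ destruct p as [r|]; simpl; [rewrite rpow_0; lra|].
  destruct (Req_EM_T 1 1); [|lra]. simpl. rewrite rpow_0; lra. }
assert (Hn' : 0 < INR n) by (apply lt_0_INR; lia).
destruct p as [r|]; simpl in *.
- destruct (Req_EM_T r 1) as [->|Hr]; simpl.
  + rewrite Rinv_1, rpow_1 by lra. lra.
  + rewrite <- rpow_plus by auto.
    replace (/ r + / (r / (r - 1))) with 1 by (field; split; lra).
    apply rpow_1; lra.
- rewrite Rinv_1, rpow_1; lra.
Qed.

Lemma vnorm_le_dim_root p n z mu : valid_pexp p -> 0 <= mu ->
  (forall i, (i < n)%nat -> Rabs (z i) <= mu) -> vnorm p n z <= dim_root p n * mu.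
Proof.
intros Hp Hmu H.
destruct p as [r|]; simpl in *; unfold sumn, maxn.
- rewrite <- (rpow_inv_rpow mu r), <- rpow_mult_distr by (auto; try apply pos_INR;
    try apply rpow_ge0; try apply Rinv_0_lt_compat; lra).
  apply rpow_le_compat_l; [split; [apply fsum_ge0; intros; apply rpow_ge0|]
    | apply Rinv_0_lt_compat; lra].
  rewrite <- (length_seq n 0) at 2. rewrite <- fsum_const. apply fsum_le.
  intros i Hi; apply in_seq in Hi. apply rpow_le_compat_l; [|lra].
  split; [apply Rabs_pos| apply H; lia].
- rewrite Rmult_1_l. apply fmax_lub; auto. intros i Hi; apply in_seq in Hi; apply H; lia.
Qed.

Lemma entnorm_le_dim_root p m n M : valid_pexp p ->
  (forall j, (j < n)%nat -> vnorm p m (fun i => M i j) <= 1) ->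
  entnorm p m n M <= dim_root p n.
Proof.
intros Hp H; destruct p as [r|]; simpl in *; unfold sumn, maxn.
- apply rpow_le_compat_l; [|apply Rinv_0_lt_compat; lra]. split.
  + apply fsum_ge0; intros; apply fsum_ge0; intros; apply rpow_ge0.
  + rewrite (fsum_swap (fun i j => rpow (Rabs (M i j)) r)).
    rewrite <- (length_seq n 0) at 2. rewrite <- (Rmult_1_r (INR _)), <- fsum_const.
    apply fsum_le. intros j Hj; apply in_seq in Hj.
    exact (proj1 (vnorm_le1 (PFin r) m (fun i => M i j) Hp) (H j ltac:(lia))).
- apply fmax_lub; [lra|]. intros i Hi; apply in_seq in Hi.
  apply fmax_lub; [lra|]. intros j Hj; apply in_seq in Hj.
  eapply Rle_trans; [|apply (H j); lia]. apply (fmax_ge_term (fun i => Rabs (M i j))).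
  apply in_seq; lia.
Qed.

Lemma ex_is_glb_le (S : R -> Prop) t0 : S t0 -> (forall t, S t -> 0 <= t) ->
  exists k, is_glb S k /\ k <= t0.
Proof.
intros H0 Hpos.
destruct (completeness (fun x => S (- x))) as [l [Hub Hlub]].
- exists 0. intros x Hx. apply Hpos in Hx. lra.
- exists (- t0). rewrite Ropp_involutive. auto.
- assert (Hl : forall y, S y -> - y <= l)
    by (intros y Hy; apply Hub; rewrite Ropp_involutive; auto).
  exists (- l). split; [split|].
  + intros y Hy. specialize (Hl y Hy). lra.
  + intros x' Hx'. assert (l <= - x'); [|lra].
    apply Hlub. intros x Hx. apply Hx' in Hx. lra.
  + specialize (Hl t0 H0). lra.
Qed.

From HB Require Import structures.
From mathcomp Require Import all_boot all_order all_algebra perm.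
From mathcomp Require Import all_classical all_reals all_analysis.
From mathcomp Require Import Rstruct Rstruct_topology.
Import Order.TTheory GRing.Theory Num.Theory.
Import numFieldNormedType.Exports.
Set Implicit Arguments.
Unset Strict Implicit.
Unset Printing Implicit Defensive.
Local Open Scope ring_scope.
Local Open Scope classical_set_scope.

Lemma continuous_mx (T U : topologicalType) m n (f : T -> 'M[U]_(m, n)) :
  (forall i j, continuous (fun t => f t i j)) -> continuous f.
Proof.
move=> fc t A [P /= nP sPA].
have : \forall s \near t, forall ij : 'I_m * 'I_n, P ij.1 ij.2 (f s ij.1 ij.2).
  by apply: filter_forall => -[i j]; exact: fc.
by apply: filterS => s Ps; apply: sPA => i j; exact: (Ps (i, j)).
Qed.

Section RealMatrices.
Variable F : realType.

Lemma col_continuous m n (j : 'I_n) : continuous (@col F m n j).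
Proof.
by apply: continuous_mx => i k; under eq_fun do rewrite mxE; exact: coord_continuous.
Qed.

Lemma vec_mx_continuous m n : continuous (@vec_mx F m n).
Proof.
by apply: continuous_mx => i j; under eq_fun do rewrite mxE; exact: coord_continuous.
Qed.

Lemma sum_continuous (T : topologicalType) (I : Type) (r : seq I) (P : pred I)
    (f : I -> T -> F) :
  (forall i, continuous (f i)) -> continuous (fun t => \sum_(i <- r | P i) f i t).
Proof.
move=> fc; elim: r => [|a r IH].
  by under eq_fun do rewrite big_nil; exact: cst_continuous.
under eq_fun do rewrite big_cons.
by case: (P a) => //= x; exact: (continuousD (fc a x) (IH x)).
Qed.

Lemma prod_continuous (T : topologicalType) (I : Type) (r : seq I) (P : pred I)
    (f : I -> T -> F) :
  (forall i, continuous (f i)) -> continuous (fun t => \prod_(i <- r | P i) f i t).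
Proof.
move=> fc; elim: r => [|a r IH].
  by under eq_fun do rewrite big_nil; exact: cst_continuous.
under eq_fun do rewrite big_cons.
by case: (P a) => //= x; exact: (continuousM (fc a x) (IH x)).
Qed.

Lemma det_continuous n : continuous (fun A : 'M[F]_n => \det A).
Proof.
rewrite /determinant; apply: sum_continuous => s A.
have prod_c : continuous (fun B : 'M[F]_n => \prod_i B i ((s : 'S_n) i)).
  by apply: prod_continuous => i B; exact: coord_continuous.
exact: (continuousM (@cst_continuous _ _ _ A) (prod_c A)).
Qed.

Definition replace_col n (Z : 'M[F]_n) (i : 'I_n) (w : 'cV[F]_n) : 'M[F]_n :=
  \matrix_(a, b) if b == i then w a 0 else Z a b.

Lemma col_replace_col n (Z : 'M[F]_n) i w j :
  col j (replace_col Z i w) = if j == i then w else col j Z.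
Proof.
by apply/matrixP => a b; rewrite !mxE [b]ord1; case: (j == i); rewrite ?mxE.
Qed.

Lemma det_replace_col n (Z : 'M[F]_n) i w : \det (replace_col Z i w) = (\adj Z *m w) i 0.
Proof.
rewrite (expand_det_col _ i) mxE; apply: eq_bigr => a _.
rewrite !mxE eqxx mulrC; congr (_ * _).
rewrite /cofactor; congr (_ * \det _); apply/matrixP => x y.
by rewrite !mxE eq_sym (negbTE (neq_lift i y)).
Qed.

Lemma compact_cols n (K : set 'cV[F]_n) :
  closed K -> (exists C, forall w, K w -> forall i, `|w i 0| <= C) ->
  compact [set Z : 'M[F]_n | forall j, K (col j Z)].
Proof.
move=> cK [C bK].
pose S := [set v : 'rV[F]_(n * n) | forall j, K (col j (vec_mx v))].
have -> : [set Z : 'M[F]_n | forall j, K (col j Z)] = vec_mx @` S.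
  apply/seteqP; split => [Z KZ|_ [v Sv <-] //].
  by exists (mxvec Z); rewrite /S /= ?mxvecK.
apply: continuous_compact; first exact/continuous_subspaceT/vec_mx_continuous.
apply: bounded_closed_compact.
  rewrite /bounded_set /bounded_near; near=> M => v Sv /=.
  apply: (@le_trans _ _ (Num.max C 0)).
    2: by near: M; apply: nbhs_pinfty_ge; exact: num_real.
  rewrite [`|v|]/Num.Def.normr /= mx_normrE; apply: bigmax_le => [|[k l] _ /=].
    by rewrite le_max lexx orbT.
  rewrite [k]ord1; case/mxvec_indexP: l => i j.
  by rewrite le_max; have := bK _ (Sv j) i; rewrite !mxE => ->.
have -> : S = \bigcap_(j in setT) ((fun v => col j (vec_mx v)) @^-1` K).
  by apply/seteqP; split => v Sv j; [move=> _; exact: Sv | exact: Sv j I].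
apply: closed_bigI => j _; apply: preimage_closed cK => v _.
by apply: continuous_comp; [exact: vec_mx_continuous | exact: col_continuous].
Unshelve. all: by end_near.
Qed.

Lemma auerbach_columns n (K : set 'cV[F]_n) :
  closed K -> (exists C, forall w, K w -> forall i, `|w i 0| <= C) ->
  (exists Z0, Z0 \in unitmx /\ forall j, K (col j Z0)) ->
  exists Z, [/\ Z \in unitmx, forall j, K (col j Z) &
    forall w, K w -> forall i, `|(invmx Z *m w) i 0| <= 1].
Proof.
move=> cK bK [Z0 [uZ0 KZ0]].
pose S := [set Z : 'M[F]_n | forall j, K (col j Z)].
have S0 : S !=set0 by exists Z0.
have cont_det : {within S, continuous (fun Z : 'M[F]_n => `|\det Z|)}.
  apply: continuous_subspaceT => Z.
  exact: (continuous_comp (@det_continuous n Z) (@norm_continuous _ F^o _)).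
have [Z /set_mem SZ Zmax] := compact_EVT_max S0 (compact_cols cK bK) cont_det.
have detZ : \det Z != 0.
  apply: contraTneq uZ0 => det0.
  rewrite unitmxE unitfE negbK -normr_eq0 eq_le normr_ge0 andbT.
  by apply: le_trans (Zmax _ (mem_set KZ0)) _; rewrite det0 normr0.
have uZ : Z \in unitmx by rewrite unitmxE unitfE.
exists Z; split => // w Kw i.
have : `|\det (replace_col Z i w)| <= `|\det Z|.
  by apply/Zmax/mem_set => j; rewrite col_replace_col; case: (j == i).
rewrite det_replace_col /invmx uZ -scalemxAl => le_adj.
by rewrite [X in `|X|]mxE normrM normfV ler_pdivrMl ?normr_gt0 // mulr1.
Qed.
End RealMatrices.

Lemma List_seq_iota s n : List.seq s n = iota s n.
Proof. by elim: n s => [|n IH] s //=; rewrite IH. Qed.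

Lemma sumn_big n (f : nat -> R) : Defs.sumn n f = \sum_(i < n) f i.
Proof.
rewrite /Defs.sumn List_seq_iota -(big_mkord xpredT f) /index_iota subn0.
by elim: (iota 0 n) => [|a s IH] /=; rewrite ?big_nil ?big_cons ?IH.
Qed.

Lemma rpow_abs_continuous r : Rle 1 r -> continuous (fun t : R => rpow (Rabs t) r).
Proof.
by move=> r1 t; have := proj1 (continuity_pt_cvg _ _) (continuity_rpow_abs r t r1).
Qed.

Lemma fsum_continuous (T : topologicalType) (l : list nat) (f : nat -> T -> R) :
  (forall i, continuous (f i)) ->
  continuous (fun t => fold_right Rplus 0%coqR (map (fun i => f i t) l)).
Proof.
move=> fc; elim: l => [|a l IH] /=; first exact: cst_continuous.
under eq_fun do rewrite RplusE.
by move=> x; exact: (@continuousD R R^o T _ _ x (fc a x) (IH x)).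
Qed.

Lemma fmax_continuous (T : topologicalType) (l : list nat) (f : nat -> T -> R) :
  (forall i, continuous (f i)) ->
  continuous (fun t => fold_right Rmax 0%coqR (map (fun i => f i t) l)).
Proof.
move=> fc; elim: l => [|a l IH] /=; first exact: cst_continuous.
under eq_fun do rewrite RmaxE.
by move=> x; exact: (continuous_max (fc a x) (IH x)).
Qed.

Lemma vnorm_gauge_continuous (T : topologicalType) p k (x : T -> vec) :
  valid_pexp p -> (forall i, continuous (fun t => x t i)) ->
  continuous (fun t => vnorm_gauge p k (x t)).
Proof.
case: p => [r|] /= r1 xc; [apply: fsum_continuous | apply: fmax_continuous] => i t.
  by have := continuous_comp (xc i t) (@rpow_abs_continuous r r1 (x t i)); apply.
by have := continuous_comp (xc i t) (@norm_continuous _ R^o (x t i)); apply.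
Qed.

Definition vec_of_cV n (w : 'cV[R]_n) : vec :=
  fun l => if insub l is Some i then w i 0 else 0.

Definition mat_of_M n (X : 'M[R]_n) : mat :=
  fun k l => if (insub k, insub l) is (Some i, Some j) then X i j else 0.

Definition cV_of_vec n (y : vec) : 'cV[R]_n := \col_i y i.

Lemma vec_of_cV_ord n (w : 'cV[R]_n) (i : 'I_n) : vec_of_cV w i = w i 0.
Proof. by rewrite /vec_of_cV valK. Qed.

Lemma mat_of_M_ord n (X : 'M[R]_n) (i j : 'I_n) : mat_of_M X i j = X i j.
Proof. by rewrite /mat_of_M !valK. Qed.

Lemma mulmv_vec_of_cV n (A : mat) (w : 'cV[R]_n) k :
  mulmv n A (vec_of_cV w) k = \sum_(l < n) A k l * w l 0.
Proof. by rewrite /mulmv sumn_big; apply: eq_bigr => l _; rewrite vec_of_cV_ord. Qed.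

Lemma mulmm_mat_of_M n (X Y : 'M[R]_n) (i j : 'I_n) :
  mulmm n (mat_of_M X) (mat_of_M Y) i j = (X *m Y) i j.
Proof.
by rewrite /mulmm sumn_big mxE; apply: eq_bigr => l _; rewrite !mat_of_M_ord.
Qed.

Lemma inverse_of_invmx n (Z : 'M[R]_n) :
  Z \in unitmx -> inverse_of n (mat_of_M (invmx Z)) (mat_of_M Z).
Proof.
have idm_ord (i j : 'I_n) : (1%:M : 'M[R]_n) i j = idm i j.
  rewrite mxE /idm; case: Nat.eq_dec => [/val_inj ->|ne]; first by rewrite eqxx.
  by case: eqP => // ij; case: ne; rewrite ij.
move=> uZ; split=> i j /ssrnat.ltP ltin /ssrnat.ltP ltjn;
  rewrite -[i]/(Ordinal ltin : nat) -[j]/(Ordinal ltjn : nat) mulmm_mat_of_M.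
  by rewrite mulVmx // idm_ord.
by rewrite mulmxV // idm_ord.
Qed.

Section FullColumnRank.
Variables (m n : nat) (A : mat) (p : pexp).
Hypotheses (p_valid : valid_pexp p) (A_fcr : full_col_rank m n A).

Let Am : 'M[R]_(m, n) := \matrix_(i < m, j < n) A i j.

Lemma mulmv_vec_of_cV_Am (w : 'cV[R]_n) (i : 'I_m) :
  mulmv n A (vec_of_cV w) i = (Am *m w) i 0.
Proof. by rewrite mulmv_vec_of_cV mxE; apply: eq_bigr => l _; rewrite mxE. Qed.

Lemma Am_inj (w : 'cV[R]_n) : Am *m w = 0 -> w = 0.
Proof.
move=> Aw0; apply/matrixP => l k; rewrite [k]ord1 mxE -vec_of_cV_ord.
apply: A_fcr; last exact/ssrnat.ltP.
move=> i /ssrnat.ltP ltim.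
by rewrite -[i]/(Ordinal ltim : nat) mulmv_vec_of_cV_Am Aw0 mxE.
Qed.

Definition normA (w : 'cV[R]_n) : R := vnorm p m (mulmv n A (vec_of_cV w)).

Lemma normA_ge0 w : 0 <= normA w.
Proof. exact/RleP/vnorm_ge0. Qed.

Lemma normA_eq0 w : normA w = 0 -> w = 0.
Proof.
move=> /(vnorm_eq0 _ _ _ p_valid) Aw0; apply: Am_inj; apply/matrixP => i k.
by rewrite [k]ord1 -mulmv_vec_of_cV_Am Aw0 ?mxE //; exact/ssrnat.ltP.
Qed.

Lemma normAZ c w : normA (c *: w) = `|c| * normA w.
Proof.
rewrite /normA -RabsE -RmultE -vnorm_scal //; apply: vnorm_ext => k _.
rewrite !mulmv_vec_of_cV RmultE mulr_sumr; apply: eq_bigr => l _.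
by rewrite mxE mulrCA.
Qed.

Lemma vec_of_cV_continuous l : continuous (fun w : 'cV[R]_n => vec_of_cV w l).
Proof.
rewrite /vec_of_cV; case: (insub l) => [i|]; first exact: coord_continuous.
exact: cst_continuous.
Qed.

Lemma closed_normA_ball : closed [set w | normA w <= 1].
Proof.
have -> : [set w | normA w <= 1] =
    (fun w => vnorm_gauge p m (mulmv n A (vec_of_cV w))) @^-1` [set x | x <= 1].
  by apply/seteqP; split => w /RleP /(vnorm_le1 _ _ _ p_valid) /RleP.
apply: preimage_closed; last exact: closed_le.
move=> w _; apply: vnorm_gauge_continuous => // k.
rewrite /mulmv /Defs.sumn; apply: fsum_continuous => l v.
exact: (continuousM (@cst_continuous _ _ _ v) (@vec_of_cV_continuous l v)).
Qed.

Lemma Am_left_inv : exists L : 'M[R]_(n, m), L *m Am = 1%:M.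
Proof.
have : row_free Am^T.
  rewrite -kermx_eq0; apply/eqP/row_matrixP => i; rewrite row0.
  have : row i (kermx Am^T) *m Am^T = 0 by apply/sub_kermxP; exact: row_sub.
  by move/(congr1 trmx); rewrite trmx_mul trmxK trmx0 => /Am_inj /(congr1 trmx);
     rewrite trmxK trmx0.
case/row_freeP => B HB; exists B^T.
by have := congr1 trmx HB; rewrite trmx_mul trmxK trmx1.
Qed.

Lemma bounded_normA_ball : exists C, forall w, normA w <= 1 -> forall i, `|w i 0| <= C.
Proof.
have [L HL] := Am_left_inv.
exists (\sum_i \sum_a `|L i a|) => w nw1 i.
have -> : w = L *m (Am *m w) by rewrite mulmxA HL mul1mx.
rewrite mxE; apply: le_trans (ler_norm_sum _ _ _) _.
apply: (@le_trans _ _ (\sum_a `|L i a|)).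
  apply: ler_sum => a _; rewrite normrM -[leRHS]mulr1 ler_wpM2l //.
  rewrite -mulmv_vec_of_cV_Am -RabsE; apply: le_trans nw1.
  by apply/RleP/Rabs_le_vnorm => //; exact/ssrnat.ltP.
rewrite (bigD1 i) //= lerDl; apply: sumr_ge0 => ? _; apply: sumr_ge0 => ? _.
exact: normr_ge0.
Qed.

Lemma normA_ball_basis : exists Z0, Z0 \in unitmx /\ forall j, normA (col j Z0) <= 1.
Proof.
pose s j := normA (col j 1%:M).
have s_gt0 j : 0 < s j.
  rewrite lt_def normA_ge0 andbT; apply/eqP => /normA_eq0 /matrixP /(_ j 0).
  by rewrite !mxE eqxx => /eqP; rewrite oner_eq0.
exists (diag_mx (\row_j (s j)^-1)); split.
  rewrite unitmxE unitfE det_diag; apply/prodf_neq0 => j _.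
  by rewrite mxE invr_eq0 gt_eqF.
move=> j; have -> : col j (diag_mx (\row_j (s j)^-1)) = (s j)^-1 *: col j 1%:M.
  by apply/matrixP => a b; rewrite !mxE; case: eqP => [->|]; rewrite ?mulr1 ?mulr0.
by rewrite normAZ gtr0_norm ?invr_gt0 // mulVf ?gt_eqF.
Qed.

Lemma auerbach_basis : exists Z, [/\ Z \in unitmx, forall j, normA (col j Z) <= 1 &
  forall (u : 'cV[R]_n) i, `|u i 0| <= normA (Z *m u)].
Proof.
have [Z [uZ ZK Zinv]] := auerbach_columns closed_normA_ball bounded_normA_ball
  normA_ball_basis.
exists Z; split => // u i; set s := normA _.
have [s0|s_neq0] := eqVneq s 0.
  have u0 : u = 0 by rewrite -[u](mulKmx uZ) (normA_eq0 s0) mulmx0.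
  by rewrite s0 u0 mxE normr0.
have s_gt0 : 0 < s by rewrite lt_def s_neq0 normA_ge0.
have := Zinv (s^-1 *: (Z *m u)); rewrite /= normAZ gtr0_norm ?invr_gt0 // mulVf //.
move=> /(_ (lexx _) i); rewrite -scalemxAr mulKmx // mxE normrM gtr0_norm ?invr_gt0 //.
by rewrite ler_pdivrMl // mulr1.
Qed.
End FullColumnRank.

Lemma mulmm_mat_of_M_col n (A : mat) (Z : 'M[R]_n) (j : 'I_n) k :
  mulmm n A (mat_of_M Z) k j = mulmv n A (vec_of_cV (col j Z)) k.
Proof.
rewrite /mulmm mulmv_vec_of_cV sumn_big; apply: eq_bigr => l _.
by rewrite mat_of_M_ord mxE.
Qed.

Lemma mulmv_mulmm_mat_of_M n (A : mat) (Z : 'M[R]_n) (y : vec) k :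
  mulmv n (mulmm n A (mat_of_M Z)) y k = mulmv n A (vec_of_cV (Z *m cV_of_vec n y)) k.
Proof.
rewrite mulmv_vec_of_cV /mulmv sumn_big.
under eq_bigr do rewrite /mulmm sumn_big RmultE mulr_suml.
rewrite exchange_big; apply: eq_bigr => l _.
rewrite !mxE mulr_sumr; apply: eq_bigr => t _.
by rewrite mat_of_M_ord mxE mulrA.
Qed.

Lemma auerbach_conditioned m n (A : mat) p : valid_pexp p -> full_col_rank m n A ->
  exists Rm Rinv : mat, inverse_of n Rm Rinv /\
    conditioned p m n (mulmm n A Rinv) (dim_root p n) (dim_root (dual_pexp p) n).
Proof.
move=> p_valid A_fcr.
have [Z [uZ Zcol Zcoord]] := auerbach_basis p_valid A_fcr.
exists (mat_of_M (invmx Z)), (mat_of_M Z); split; first exact: inverse_of_invmx.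
split.
  apply: entnorm_le_dim_root => // j /ssrnat.ltP ltjn.
  rewrite (vnorm_ext _ _ _ (mulmv n A (vec_of_cV (col (Ordinal ltjn) Z)))).
    exact/RleP/Zcol.
  by move=> k _; rewrite -mulmm_mat_of_M_col.
move=> z; apply: vnorm_le_dim_root; [exact: valid_dual_pexp | exact: vnorm_ge0 |].
move=> i /ssrnat.ltP ltin.
rewrite (vnorm_ext _ _ _ (mulmv n A (vec_of_cV (Z *m cV_of_vec n z)))).
  by have := Zcoord (cV_of_vec n z) (Ordinal ltin); rewrite mxE RabsE => /RleP.
by move=> k _; rewrite mulmv_mulmm_mat_of_M.
Qed.

Local Close Scope ring_scope.

Theorem mainTheorem2 (m n : nat) (A : mat) (p : pexp) :
  full_col_rank m n A -> valid_pexp p ->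
  exists Rm Rinv : mat, inverse_of n Rm Rinv /\
    exists k : R, cond_number_is p m n (mulmm n A Rinv) k /\ k <= INR n.
Proof.
intros A_fcr p_valid.
destruct (auerbach_conditioned p_valid A_fcr) as (Rm & Rinv & Hinv & Hcond).
exists Rm, Rinv; split; [exact Hinv|].
destruct (ex_is_glb_le (cond_products p m n (mulmm n A Rinv))
  (dim_root p n * dim_root (dual_pexp p) n)) as (k & Hglb & Hk).
- exists (dim_root p n), (dim_root (dual_pexp p) n).
  repeat split; auto using dim_root_ge0; apply Hcond.
- intros t (a & b & Ha & Hb & _ & ->); apply Rmult_le_pos; auto.
- exists k; split; [exact Hglb|]. rewrite <- (dim_root_dual p n p_valid). exact Hk.
Qed.
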